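(* Let $G=(V,E)$ be a finite simple graph of order at least $3$ in which every connected component has order at least $3$, let $M\subset V$ be any set of (marked) vertices, and let $\mathcal{G}$ be an Abelian group with $|\mathcal{G}|\geq \Delta(G)+\mathrm{col}(G)-1$. Then there exists a labeling $f\colon E\to\mathcal{G}\setminus\{0\}$ such that $w_f(v)\neq 0$ for every $v\in M$ and $w_f(u)\neq w_f(v)$ for every edge $uv\in E$ with $u,v\notin M$.
   Context: $w_f(v)=\sum_{u\in N(v)} f(uv)$ (sum in $\mathcal{G}$) is the weighted degree of $v$. $\Delta(G)$ is the maximum degree of $G$. The coloring number $\mathrm{col}(G)$ is the least integer $k$ such that every subgraph of $G$ has minimum degree less than $k$ (equivalently, the vertices can be ordered so that each has at most $k-1$ neighbours preceding it). *)

From mathcomp Require Import all_boot all_order all_algebra.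
Set Implicit Arguments. Unset Strict Implicit. Unset Printing Implicit Defensive.
Import GRing.Theory.

Definition simple_graph (T : finType) (e : rel T) : Prop :=
  symmetric e /\ irreflexive e.

Definition deg (T : finType) (e : rel T) (v : T) : nat := #|[set u | e v u]|.

Definition maxdeg (T : finType) (e : rel T) : nat := \max_(v : T) deg e v.

Definition is_subgraph (T : finType) (e : rel T) (S : {set T}) (F : rel T) : Prop :=
  S != set0 /\ symmetric F /\ (forall x y, F x y -> e x y /\ x \in S /\ y \in S).

Definition every_subgraph_mindeg_lt (T : finType) (e : rel T) (k : nat) : Prop :=
  forall (S : {set T}) (F : rel T), is_subgraph e S F ->
    exists2 x, x \in S & #|[set y in S | F x y]| < k.

Definition is_coloring_number (T : finType) (e : rel T) (c : nat) : Prop :=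
  every_subgraph_mindeg_lt e c /\
  (forall k, every_subgraph_mindeg_lt e k -> c <= k).

Definition wdeg (T : finType) (G : zmodType) (e : rel T) (f : {set T} -> G) (v : T) : G :=
  (\sum_(u | e v u) f [set v; u])%R.

From mathcomp Require Import all_boot all_order all_algebra.
From mathcomp Require Import zify.
Set Implicit Arguments. Unset Strict Implicit. Unset Printing Implicit Defensive.
Import GRing.Theory.

(* Order the vertices so that each one has fewer than k = col(G) earlier
   neighbours, and label the edges greedily, in lexicographic order of
   (earlier endpoint, later endpoint).  The invariant is: labeled edges are
   nonzero, a marked vertex whose edges are all labeled has nonzero weight, and
   adjacent unmarked vertices u, v have distinct weights as soon as every edge
   at u or v other than uv is labeled -- from then on, labeling uv adds the
   same amount to both weights.  When the edge qy (q earlier) is labeled, the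
   endpoint q rules out at most Delta - 1 nonzero labels and y at most k - 2
   (if all edges at y are then labeled, they all go to earlier vertices), so
   together with 0 fewer than Delta + k - 1 labels are excluded. *)

Lemma exists_notin_cons (T : eqType) (x0 : T) (s L : seq T) :
  uniq s -> (count (predC1 x0) L).+1 < size s -> exists2 a, a \in s & a \notin x0 :: L.
Proof.
move=> us ltLs; have [/hasP[a sa aL]|/hasPn sub] := boolP (has [predC x0 :: L] s).
  by exists a.
have : size s <= size (x0 :: filter (predC1 x0) L).
  apply: uniq_leq_size => // a /sub; rewrite /= negbK !inE mem_filter /=.
  by case: eqP.
by rewrite /= size_filter leqNgt ltLs.
Qed.

Section Graph.
Variables (T : finType) (e : rel T).
Hypotheses (esym : symmetric e) (eirr : irreflexive e).

Lemma deg_le_maxdeg v : deg e v <= maxdeg e.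
Proof. exact: (leq_bigmax (F := deg e)). Qed.

Lemma degeneracy_order_on k (S : {set T}) : every_subgraph_mindeg_lt e k ->
  exists s : seq T, [/\ uniq s, s =i S &
    forall v, v \in s -> #|[set z | e v z & index z s < index v s]| < k].
Proof.
move=> mindeg; elim: {S}#|S| {-2}S (erefl #|S|) => [|n IH] S cardS.
  by exists [::]; split=> // v; rewrite (cards0_eq cardS) inE.
pose F := [rel a b | [&& e a b, a \in S & b \in S]].
have subF : is_subgraph e S F.
  split; first by rewrite -card_gt0 cardS.
  split=> [a b|a b /and3P[-> -> ->] //].
  by rewrite /= esym; case: (a \in S); case: (b \in S); rewrite ?andbF.
have [x xS ltx] := mindeg S F subF.
have [|s [us memS backs]] := IH (S :\ x).
  by rewrite (cardsD1 x) xS in cardS; case: cardS.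
have xNs : x \notin s by rewrite memS !inE eqxx.
exists (rcons s x); split.
- by rewrite rcons_uniq xNs.
- by move=> v; rewrite mem_rcons inE memS !inE; case: eqP => // ->.
have index_x z : index z (rcons s x) = if z \in s then index z s else size s + (z != x).
  by rewrite -cats1 index_cat /=; case: (z \in s); rewrite //= eq_sym; case: eqP.
move=> v; rewrite mem_rcons inE => /predU1P[->|vs].
  apply: leq_ltn_trans ltx; apply/subset_leq_card/subsetP => z.
  rewrite !inE !index_x (negbTE xNs) eqxx addn0 => /andP[exz].
  case: ifP => [zs _|_]; last by rewrite ltnNge leq_addr.
  have zS : z \in S by move: zs; rewrite memS inE => /andP[].
  by rewrite /= zS exz xS.
apply: leq_ltn_trans (backs v vs); apply/subset_leq_card/subsetP => z.
rewrite !inE !index_x vs => /andP[-> /=]; case: ifP => // _.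
by rewrite ltnNge (leq_trans (ltnW _) (leq_addr _ _)) ?index_mem.
Qed.

Lemma degeneracy_order k : every_subgraph_mindeg_lt e k ->
  exists s : seq T, [/\ uniq s, forall v, v \in s &
    forall v, #|[set z | e v z & index z s < index v s]| < k].
Proof.
move=> /(degeneracy_order_on [set: T]) [s [us memS backs]].
have sT v : v \in s by rewrite memS inE.
by exists s; split=> // v; apply: backs.
Qed.

Hypothesis comp3 : forall x : T, 3 <= #|[set y | connect e x y]|.

Lemma no_isolated_pair u x :
  (forall z, e u z -> z = x) -> (forall z, e x z -> z = u) -> False.
Proof.
move=> Nu Nx.
have closed_ux : closed e (mem [set u; x]).
  suff to_ux a b : e a b -> a \in [set u; x] -> b \in [set u; x].
    by move=> a b eab; apply/idP/idP; apply: to_ux; rewrite // esym.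
  by move=> eab /set2P[E|E]; subst a; rewrite ?(Nu _ eab) ?(Nx _ eab) !inE eqxx ?orbT.
have : [set y | connect e u y] \subset [set u; x].
  by apply/subsetP=> y; rewrite inE => cuy; rewrite -(closed_connect closed_ux cuy) set21.
move/subset_leq_card; have := comp3 u; have := cards2 u x; case: (u != x); lia.
Qed.

Lemma exists_neighbor u : exists v, e u v.
Proof.
have [v|noN] := pickP (e u); first by exists v.
by case: (@no_isolated_pair u u) => z; rewrite noN.
Qed.

Lemma two_le_maxdeg (u : T) : 2 <= maxdeg e.
Proof.
have [x eux] := exists_neighbor u.
have only_nb p o z : deg e p < 2 -> e p o -> e p z -> z = o.
  by rewrite ltnS => /card_le1_eqP degp epo epz; apply: degp; rewrite inE.
have [le2u|ltu] := leqP 2 (deg e u); first exact: leq_trans (deg_le_maxdeg u).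
have [le2x|ltx] := leqP 2 (deg e x); first exact: leq_trans (deg_le_maxdeg x).
case: (no_isolated_pair (u := u) (x := x)) => z; first exact: only_nb.
by apply: only_nb; rewrite // esym.
Qed.

End Graph.

Section Labeling.
Variables (T : finType) (e : rel T) (G : zmodType) (M : {set T}) (idx : T -> T -> nat).
Hypotheses (esym : symmetric e) (eirr : irreflexive e).
Hypothesis idxC : forall u v, idx u v = idx v u.
Hypothesis idx_inj : forall u v u' v', idx u v = idx u' v' -> [set u; v] = [set u'; v'].
Hypothesis comp3 : forall x : T, 3 <= #|[set y | connect e x y]|.

Local Open Scope ring_scope.

Definition finished t v := [forall z, e v z ==> (idx v z < t)%N].
Definition finished_but t v x := [forall z, e v z && (z != x) ==> (idx v z < t)%N].
Definition settled t u v := finished_but t u v && finished_but t v u.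

Definition wdeg_but (f : {set T} -> G) p o := \sum_(u | e p u && (u != o)) f [set p; u].

Definition good t (f : {set T} -> G) : Prop :=
  [/\ forall u v, e u v -> (idx u v < t)%N -> f [set u; v] != 0,
      forall v, v \in M -> finished t v -> wdeg e f v != 0 &
      forall u v, e u v -> u \notin M -> v \notin M -> settled t u v ->
        wdeg e f u != wdeg e f v].

Definition relabel (f : {set T} -> G) (E : {set T}) (a : G) : {set T} -> G :=
  fun D => if D == E then a else f D.

(* The labels of the edge [po] that [good t] rules out at its endpoint [p],
   except [0]. *)
Definition forbidden t (f : {set T} -> G) p o : seq G :=
  if p \in M then (if finished t p then [:: - wdeg_but f p o] else [::])
  else [seq wdeg e f v - wdeg_but f p o
         | v in [set v | [&& e p v, v != o, v \notin M & settled t p v]]].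

Lemma settledC t u v : settled t u v = settled t v u.
Proof. exact: andbC. Qed.

Lemma neq_of_edge u v : e u v -> u != v.
Proof. by apply: contraTneq => ->; rewrite eirr. Qed.

Lemma wdeg_split f p o : e p o -> wdeg e f p = wdeg_but f p o + f [set p; o].
Proof. by move=> epo; rewrite /wdeg (bigD1 o) //= addrC. Qed.

Lemma wdeg_but_eq0 f p o : (forall u, e p u -> u = o) -> wdeg_but f p o = 0.
Proof.
move=> Np; rewrite /wdeg_but big_pred0 // => u.
by case: (boolP (e p u)) => // /Np ->; rewrite eqxx.
Qed.

Lemma wdeg_but_eq1 f p o v : e p v -> v != o ->
  (forall u, e p u -> u != o -> u = v) -> wdeg_but f p o = f [set p; v].
Proof.
move=> epv vo Np; rewrite /wdeg_but (big_pred1 v) // => u /=.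
by apply/andP/eqP => [[/Np]|->]; [apply|split].
Qed.

Lemma finished_succ t v : (forall z, e v z -> idx v z != t) ->
  finished t.+1 v = finished t v.
Proof.
move=> neq; apply: eq_forallb => z; case: (boolP (e v z)) => //= /neq.
by rewrite ltnS leq_eqVlt => /negbTE ->.
Qed.

Lemma finished_but_succ t v x : (forall z, e v z -> z != x -> idx v z != t) ->
  finished_but t.+1 v x = finished_but t v x.
Proof.
move=> neq; apply: eq_forallb => z; case: (boolP (e v z)) => //= evz.
case: (boolP (z != x)) => //= /(neq _ evz).
by rewrite ltnS leq_eqVlt => /negbTE ->.
Qed.

Lemma good_nil : good 0 (fun=> 0).
Proof.
split=> // [v _|u v euv _ _ /andP[/forallP fu /forallP fv]].
  by have [z evz] := exists_neighbor esym comp3 v; move/forallP/(_ z); rewrite evz.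
case: (no_isolated_pair esym comp3 (u := u) (x := v)) => z ez; apply/eqP;
  apply: contraT => zN; [move: (fu z) | move: (fv z)]; by rewrite ez zN.
Qed.

Lemma good_succ_noedge t f :
  (forall u v, e u v -> idx u v != t) -> good t f -> good t.+1 f.
Proof.
move=> noedge [nz marked distinct]; split.
- move=> u v euv; rewrite ltnS leq_eqVlt (negbTE (noedge _ _ euv)); exact: nz.
- by move=> v vM; rewrite finished_succ => [|z /noedge]; [apply: marked|].
- move=> u v euv uM vM.
  rewrite /settled !finished_but_succ => [|z /noedge ne _|z /noedge ne _] //.
  exact: distinct.
Qed.

Lemma idx_neq t p o u z : idx p o = t -> [set u; z] != [set p; o] -> idx u z != t.
Proof. by move=> <-; apply: contra => /eqP/idx_inj ->. Qed.

Lemma set2_neq_edge w x z : e w z -> z != x -> [set w; z] != [set w; x].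
Proof.
move=> ewz zx; apply/eqP => E; have : z \in [set w; x] by rewrite -E set22.
by rewrite !inE (negbTE zx) orbF eq_sym (negbTE (neq_of_edge ewz)).
Qed.

Lemma wdeg_relabel_notin f (E : {set T}) a v :
  v \notin E -> wdeg e (relabel f E a) v = wdeg e f v.
Proof.
move=> vE; apply: eq_bigr => u _; rewrite /relabel; case: eqP => // DE.
by move: vE; rewrite -DE set21.
Qed.

Lemma wdeg_relabel_endpoint f p o a : e p o ->
  wdeg e (relabel f [set p; o] a) p = wdeg_but f p o + a.
Proof.
move=> epo; rewrite (wdeg_split _ epo) /relabel eqxx; congr (_ + _).
by apply: eq_bigr => u /andP[epu uo]; rewrite (negbTE (set2_neq_edge epu uo)).
Qed.

Section Relabel.
Variables (t : nat) (f : {set T} -> G) (p o : T) (a : G).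
Hypotheses (epo : e p o) (idx_po : idx p o = t).
Hypothesis a_allowed : a \notin forbidden t.+1 f p o.

Local Notation f' := (relabel f [set p; o] a).

Lemma relabel_marked : p \in M -> finished t.+1 p -> wdeg e f' p != 0.
Proof.
move=> pM fin; move: a_allowed; rewrite /forbidden pM fin inE.
by rewrite wdeg_relabel_endpoint // addrC addr_eq0.
Qed.

Lemma relabel_distinct v : good t f -> e p v -> p \notin M -> v \notin M ->
  settled t.+1 p v -> wdeg e f' p != wdeg e f' v.
Proof.
move=> [_ _ distinct] epv pM vM st; rewrite wdeg_relabel_endpoint //.
have [eq_vo|vo] := eqVneq v o.
  subst v; have eop : e o p by rewrite esym.
  have idx_neq_at w x :
      [set w; x] = [set p; o] -> forall z, e w z -> z != x -> idx w z != t.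
    by move=> wx z ewz zx; apply: idx_neq idx_po _; rewrite -wx set2_neq_edge.
  rewrite /settled !finished_but_succ in st;
    [|exact: idx_neq_at _ _ (setUC _ _)|exact: idx_neq_at _ _ erefl].
  have := distinct p o epo pM vM st.
  have -> : wdeg e f' o = wdeg_but f o p + a by rewrite setUC wdeg_relabel_endpoint.
  rewrite (wdeg_split f epo) (wdeg_split f eop) (setUC [set o]).
  by apply: contra => /eqP/addIr->.
have vE : v \notin [set p; o] by rewrite !inE (negbTE vo) orbF eq_sym neq_of_edge.
rewrite wdeg_relabel_notin //; apply: contra a_allowed => /eqP E.
rewrite /forbidden (negbTE pM).
have -> : a = wdeg e f v - wdeg_but f p o by rewrite -E addrC addKr.
by apply: image_f; rewrite inE epv vo vM st.
Qed.

End Relabel.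

Lemma good_relabel t f q y a : e q y -> idx q y = t -> good t f -> a != 0 ->
  a \notin forbidden t.+1 f q y -> a \notin forbidden t.+1 f y q ->
  good t.+1 (relabel f [set q; y] a).
Proof.
move=> eqy idx_qy gf a0 aq ay; have [nz marked distinct] := gf.
have endpoint w : w \in [set q; y] -> exists o,
    [/\ [set w; o] = [set q; y], e w o, idx w o = t & a \notin forbidden t.+1 f w o].
  by case/set2P=> ->; [exists y | exists q; rewrite setUC esym idxC].
have off w x : w \notin [set q; y] -> forall z, e w z -> z != x -> idx w z != t.
  move=> wE z _ _; apply: idx_neq idx_qy _.
  by apply: contraNneq wE => <-; rewrite set21.
split.
- move=> u v euv; rewrite /relabel; case: ifP => [//|/eqP uvE].
  rewrite ltnS leq_eqVlt => /orP[/eqP uv_t|]; last exact: nz.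
  by case: uvE; apply: idx_inj; rewrite uv_t idx_qy.
- move=> v vM; have [/endpoint[o [<- evo idx_vo av]]|vE] := boolP (v \in [set q; y]).
    exact: relabel_marked.
  rewrite wdeg_relabel_notin // finished_succ => [|z evz]; first exact: marked.
  by apply: (off v v vE z evz); rewrite eq_sym neq_of_edge.
- move=> u v euv uM vM st.
  have [/endpoint[x [<- eux idx_ux au]]|uE] := boolP (u \in [set q; y]).
    exact: (relabel_distinct eux idx_ux au gf).
  have [/endpoint[x [<- evx idx_vx av]]|vE] := boolP (v \in [set q; y]).
    by rewrite eq_sym; apply: (relabel_distinct evx idx_vx av gf); rewrite 1?esym 1?settledC.
  rewrite !wdeg_relabel_notin //; apply: distinct => //.
  by move: st; rewrite /settled !finished_but_succ //; exact: off.
Qed.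

Lemma count_forbidden_finished t f p o : e p o -> finished t p ->
  (count (predC1 0%R) (forbidden t f p o) <= deg e p - 1)%N.
Proof.
move=> epo fin; rewrite /forbidden fin.
have deg_o : deg e p = #|[set v | e p v & v != o]|.+1.
  rewrite /deg (cardsD1 o) inE epo; congr (_.+1).
  by apply: eq_card => v; rewrite !inE andbC.
case: ifP => _.
  have [deg2|] := leqP 2 (deg e p).
    by apply: leq_trans (count_size _ _) _; rewrite /=; lia.
  rewrite deg_o !ltnS leqn0 cards_eq0 => /eqP noN.
  rewrite wdeg_but_eq0 ?oppr0 /= ?eqxx // => u epu; apply/eqP; apply: contraT => uo.
  have : u \in [set v | e p v & v != o] by rewrite inE epu uo.
  by rewrite noN inE.
apply: leq_trans (count_size _ _) _; rewrite size_image deg_o subSS subn0.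
by apply/subset_leq_card/subsetP => v; rewrite !inE => /and4P[-> -> _ _].
Qed.

Lemma count_forbidden_unfinished t f p o : ~~ finished t p ->
  (count (predC1 0%R) (forbidden t f p o) <= 1)%N.
Proof.
move=> nfin; have [z] := forallPn nfin; rewrite negb_imply => /andP[epz late].
rewrite /forbidden (negbTE nfin); case: ifP => // _.
apply: leq_trans (count_size _ _) _; rewrite size_image; apply/card_le1_eqP => v w.
have only_late x : x \in [set v | [&& e p v, v != o, v \notin M & settled t p v]] -> x = z.
  rewrite inE => /and4P[_ _ _ /andP[/forallP/(_ z) + _]]; rewrite epz /= => fx.
  apply/eqP; rewrite eq_sym; apply: (contraNT _ late) => zx; exact: (implyP fx).
by move=> /only_late -> /only_late ->.
Qed.

Lemma count_forbidden_le_maxdeg t f p o : e p o ->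
  (count (predC1 0%R) (forbidden t f p o) <= maxdeg e - 1)%N.
Proof.
move=> epo; have := two_le_maxdeg esym comp3 p; have := deg_le_maxdeg e p.
have [fin|nfin] := boolP (finished t p).
  by have := count_forbidden_finished f epo fin; lia.
by have := count_forbidden_unfinished f o nfin; lia.
Qed.

End Labeling.

Section Rank.
Variables (T : finType) (e : rel T) (G : zmodType) (M : {set T}) (k : nat).
Variables (r : T -> nat) (N : nat) (s : seq G).
Hypotheses (esym : symmetric e) (eirr : irreflexive e).
Hypothesis comp3 : forall x : T, 3 <= #|[set y | connect e x y]|.
Hypotheses (r_inj : injective r) (r_lt : forall v, r v < N).
Hypothesis back_lt : forall v, #|[set z | e v z & r z < r v]| < k.
Hypotheses (s_uniq : uniq s) (s_size : maxdeg e + k - 1 <= size s).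

(* Lexicographic order on the pairs (smaller rank, larger rank). *)
Definition edge_index u v := minn (r u) (r v) * N + maxn (r u) (r v).

Lemma edge_indexC u v : edge_index u v = edge_index v u.
Proof. by rewrite /edge_index minnC maxnC. Qed.

Lemma edge_index_inj u v u' v' :
  edge_index u v = edge_index u' v' -> [set u; v] = [set u'; v'].
Proof.
move=> E; have N_gt0 : 0 < N by apply: leq_ltn_trans (r_lt u).
have max_lt w z : maxn (r w) (r z) < N by rewrite gtn_max !r_lt.
have Ediv : edge_index u v %/ N = edge_index u' v' %/ N by rewrite E.
have Emod : edge_index u v %% N = edge_index u' v' %% N by rewrite E.
rewrite /edge_index !divnMDl // !divn_small ?max_lt // !addn0 in Ediv.
rewrite /edge_index !modnMDl !modn_small ?max_lt // in Emod.
have [[ru rv]|[ru rv]] : (r u = r u' /\ r v = r v') \/ (r u = r v' /\ r v = r u') by lia.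
  by rewrite (r_inj ru) (r_inj rv).
by rewrite (r_inj ru) (r_inj rv) setUC.
Qed.

Lemma edge_index_lt_min a b c d :
  minn (r a) (r b) < minn (r c) (r d) -> edge_index a b < edge_index c d.
Proof. by move=> lt; have := r_lt a; have := r_lt b; rewrite /edge_index; nia. Qed.

Lemma edge_index_bound u v : edge_index u v < N * N.
Proof. by have := r_lt u; have := r_lt v; rewrite /edge_index; nia. Qed.

Local Notation finished := (finished e edge_index).
Local Notation good := (good e M edge_index).
Local Notation forbidden := (forbidden e M edge_index).

Section Edge.
Variables (q y : T) (f : {set T} -> G).
Hypotheses (eqy : e q y) (rqy : r q < r y).
Local Notation t := (edge_index q y).

Lemma edge_index_gt_rank u z : r q < r u -> r u < r z -> t < edge_index u z.
Proof. by move=> qu uz; apply: edge_index_lt_min; lia. Qed.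

Lemma finished_high_deg_lt : finished t.+1 y -> deg e y < k.
Proof.
move=> /forallP fin; apply: leq_ltn_trans (back_lt y); apply/subset_leq_card/subsetP => z.
rewrite !inE => eyz; rewrite eyz /=; case: (ltngtP (r z) (r y)) => // [yz|/r_inj zy].
  by have := implyP (fin z) eyz; have := edge_index_gt_rank rqy yz; lia.
by rewrite zy eirr in eyz.
Qed.

(* With at most one earlier neighbour per vertex, while [y] keeps an unlabeled
   edge [y v], the pair [y v] is settled only when [q] and [v] are the only
   neighbours of [y] and [y] is the only neighbour of [v]; the label it rules
   out is then [0]. *)
Lemma count_forbidden_high_k_le2 : k <= 2 -> ~~ finished t.+1 y ->
  count (predC1 0%R) (forbidden t.+1 f y q) = 0.
Proof.
move=> k2 nfin; rewrite /forbidden (negbTE nfin); case: ifP => // _.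
have forward w b z : e w b -> r b < r w -> e w z -> z != b -> r w < r z.
  move=> ewb bw ewz zb; case: (ltngtP (r z) (r w)) => // [zw|/r_inj zw]; last first.
    by rewrite zw eirr in ewz.
  have : #|[set z | e w z & r z < r w]| <= 1.
    by rewrite -ltnS; apply: leq_trans (back_lt w) k2.
  move/card_le1_eqP/(_ z b); rewrite !inE ewz zw ewb bw => /(_ isT isT) zb'.
  by rewrite zb' eqxx in zb.
have late w z : r y <= r w -> r w < r z -> edge_index w z < t.+1 = false.
  by move=> yw wz; apply/negbTE; rewrite -leqNgt; apply: edge_index_gt_rank; lia.
rewrite (eq_in_count (a2 := pred0)) ?count_pred0 // => x /imageP[v].
rewrite inE => /and4P[eyv vq _ /andP[fy fv]] ->{x} /=; apply/negbTE; rewrite negbK subr_eq0.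
have eyq : e y q by rewrite esym.
have evy : e v y by rewrite esym.
have ryv : r y < r v := forward y q v eyq rqy eyv vq.
have y_nbrs z : e y z -> z != q -> z = v.
  move=> eyz zq; apply/eqP; apply: contraT => zv.
  have /implyP := forallP fy z.
  by rewrite eyz zv (late y z (leqnn _) (forward y q z eyq rqy eyz zq)); apply.
have v_nbrs z : e v z -> z = y.
  move=> evz; apply/eqP; apply: contraT => zy.
  have /implyP := forallP fv z.
  by rewrite evz zy (late v z (ltnW ryv) (forward v y z evy ryv evz zy)); apply.
rewrite (wdeg_split f evy) (wdeg_but_eq0 f v_nbrs) (wdeg_but_eq1 f eyv vq y_nbrs).
by rewrite add0r setUC.
Qed.

Lemma count_forbidden_high : count (predC1 0%R) (forbidden t.+1 f y q) <= k - 2.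
Proof.
have eyq : e y q by rewrite esym.
have [fin|nfin] := boolP (finished t.+1 y).
  have := count_forbidden_finished M f eyq fin.
  by have := finished_high_deg_lt fin; lia.
have [k2|k3] := leqP k 2; first by rewrite count_forbidden_high_k_le2.
by have := count_forbidden_unfinished M f q nfin; lia.
Qed.

Lemma good_step : good t f -> exists f' : {set T} -> G, good t.+1 f'.
Proof.
move=> gf.
have k2 : 2 <= k.
  have : 0 < #|[set z | e y z & r z < r y]|.
    by apply/card_gt0P; exists q; rewrite inE esym eqy.
  by have := back_lt y; lia.
have : (count (predC1 0%R) (forbidden t.+1 f q y ++ forbidden t.+1 f y q)).+1 < size s.
  have := count_forbidden_le_maxdeg M edge_index esym comp3 t.+1 f eqy.
  have := count_forbidden_high; have := two_le_maxdeg esym comp3 q.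
  by rewrite count_cat; lia.
case/(exists_notin_cons s_uniq) => a _.
rewrite in_cons mem_cat !negb_or => /and3P[a0 aq ay].
exists (relabel f [set q; y] a).
exact: (good_relabel esym eirr edge_indexC edge_index_inj eqy erefl gf a0 aq ay).
Qed.

End Edge.

Lemma good_at t : exists f : {set T} -> G, good t f.
Proof.
elim: t => [|t [f gf]]; first by exists (fun=> 0%R); exact: good_nil.
have [[q y] /andP[/= eqy /eqP idx_t]|noedge] :=
  pickP [pred qy : T * T | e qy.1 qy.2 && (edge_index qy.1 qy.2 == t)].
  wlog rqy : q y eqy idx_t / r q < r y.
    move=> oriented; case: (ltngtP (r q) (r y)) => [|ryq|/r_inj qy]; first exact: oriented.
      by apply: (oriented y q); rewrite 1?esym 1?edge_indexC.
    by move: eqy; rewrite qy eirr.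
  by subst t; exact: (good_step eqy rqy gf).
exists f; apply: (good_succ_noedge _ gf) => u v euv; apply/eqP => idx_t.
by have := noedge (u, v); rewrite /= euv idx_t eqxx.
Qed.

Lemma exists_labeling : exists f : {set T} -> G,
  (forall u v, e u v -> f [set u; v] != 0%R) /\
  (forall v, v \in M -> wdeg e f v != 0%R) /\
  (forall u v, e u v -> u \notin M -> v \notin M -> wdeg e f u != wdeg e f v).
Proof.
have [f [nz marked distinct]] := good_at (N * N).
have labeled P w : [forall z, P z ==> (edge_index w z < N * N)].
  by apply/forallP => z; apply/implyP => _; apply: edge_index_bound.
exists f; split; [|split].
- by move=> u v euv; apply: nz; rewrite ?edge_index_bound.
- by move=> v vM; apply: marked => //; exact: labeled.
- by move=> u v euv uM vM; apply: distinct => //; apply/andP; split; exact: labeled.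
Qed.

End Rank.

Theorem theorem4 (T : finType) (e : rel T) (M : {set T}) (G : zmodType) (c : nat) :
  simple_graph e ->
  3 <= #|T| ->
  (forall x : T, 3 <= #|[set y | connect e x y]|) ->
  is_coloring_number e c ->
  (exists s : seq G, uniq s /\ maxdeg e + c - 1 <= size s) ->
  exists f : {set T} -> G,
    (forall u v, e u v -> f [set u; v] != 0%R) /\
    (forall v, v \in M -> wdeg e f v != 0%R) /\
    (forall u v, e u v -> u \notin M -> v \notin M -> wdeg e f u != wdeg e f v).
Proof.
(* The hypothesis [3 <= #|T|] is implied by the one on components unless T is
   empty, where there is nothing to prove. *)
move=> [esym eirr] _ comp3 [mindeg _] [s [s_uniq s_size]].
have [o [o_uniq in_o back_lt]] := degeneracy_order esym mindeg.
apply: (exists_labeling M esym eirr comp3 (r := index^~ o) (N := size o) _ _ back_lt)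
  s_uniq s_size.
- by move=> u v; apply: index_inj (in_o u) (in_o v).
- by move=> v; rewrite index_mem.
Qed.
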